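(* Let $\pi$ be a representation of a normed $*$-algebra $A$ in a pre-Hilbert space $H$, and assume that $\pi$ is weakly continuous on $A_{sa}$. Then every operator $\pi(a)$ $(a\in A)$ is bounded, and $\|\pi(a)\|\le r_\sigma(a)$ for all $a\in A$.
   Context: All algebras are complex. A normed $*$-algebra is a complex algebra $A$ with an involution $a\mapsto a^*$ (conjugate linear, $(ab)^*=b^*a^*$, $a^{**}=a$) and a norm $|\cdot|$ with $|ab|\le|a||b|$; the involution need not be continuous. $A_{sa}=\{a\in A:a=a^*\}$, viewed as a real normed space. For $a\in A$, $r_\lambda(a):=\inf_{n\ge1}|a^n|^{1/n}$ and $r_\sigma(a):=r_\lambda(a^*a)^{1/2}$. A representation of $A$ in a (complex, not necessarily complete) pre-Hilbert space $H$ is an algebra homomorphism $\pi$ from $A$ into the algebra of all linear operators $H\to H$ such that $\langle\pi(a)x,y\rangle=\langle x,\pi(a^* )y\rangle$ for all $x,y\in H$, $a\in A$. $\pi$ is weakly continuous on $A_{sa}$ if for every $x\in H$ the functional $a\mapsto\langle\pi(a)x,x\rangle$ is continuous on $A_{sa}$ (with respect to the norm of $A$). *)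

From Stdlib Require Import Reals Lra.
Open Scope R_scope.

Definition C : Type := (R * R)%type.
Definition Cre (z : C) : R := fst z.
Definition Cim (z : C) : R := snd z.
Definition C0 : C := (0, 0).
Definition C1 : C := (1, 0).
Definition Cadd (z w : C) : C := (Cre z + Cre w, Cim z + Cim w).
Definition Copp (z : C) : C := (- Cre z, - Cim z).
Definition Cmul (z w : C) : C :=
  (Cre z * Cre w - Cim z * Cim w, Cre z * Cim w + Cim z * Cre w).
Definition Cconj (z : C) : C := (Cre z, - Cim z).
Definition Cmod (z : C) : R := sqrt (Cre z ^ 2 + Cim z ^ 2).

(** * Normed *-algebras (complex algebra, submultiplicative norm,
      involution not assumed continuous) *)
Record NormedStarAlgebra := {
  nsa_car :> Type;
  nsa_zero : nsa_car;
  nsa_add : nsa_car -> nsa_car -> nsa_car;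
  nsa_opp : nsa_car -> nsa_car;
  nsa_scal : C -> nsa_car -> nsa_car;
  nsa_mul : nsa_car -> nsa_car -> nsa_car;
  nsa_star : nsa_car -> nsa_car;
  nsa_norm : nsa_car -> R;
  nsa_add_assoc : forall a b c, nsa_add a (nsa_add b c) = nsa_add (nsa_add a b) c;
  nsa_add_comm : forall a b, nsa_add a b = nsa_add b a;
  nsa_add_0_l : forall a, nsa_add nsa_zero a = a;
  nsa_add_opp_r : forall a, nsa_add a (nsa_opp a) = nsa_zero;
  nsa_scal_assoc : forall l m a, nsa_scal l (nsa_scal m a) = nsa_scal (Cmul l m) a;
  nsa_scal_1 : forall a, nsa_scal C1 a = a;
  nsa_scal_add_l : forall l a b,
    nsa_scal l (nsa_add a b) = nsa_add (nsa_scal l a) (nsa_scal l b);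
  nsa_scal_add_r : forall l m a,
    nsa_scal (Cadd l m) a = nsa_add (nsa_scal l a) (nsa_scal m a);
  nsa_mul_assoc : forall a b c, nsa_mul a (nsa_mul b c) = nsa_mul (nsa_mul a b) c;
  nsa_mul_add_l : forall a b c,
    nsa_mul (nsa_add a b) c = nsa_add (nsa_mul a c) (nsa_mul b c);
  nsa_mul_add_r : forall a b c,
    nsa_mul a (nsa_add b c) = nsa_add (nsa_mul a b) (nsa_mul a c);
  nsa_mul_scal_l : forall l a b, nsa_mul (nsa_scal l a) b = nsa_scal l (nsa_mul a b);
  nsa_mul_scal_r : forall l a b, nsa_mul a (nsa_scal l b) = nsa_scal l (nsa_mul a b);
  nsa_star_add : forall a b, nsa_star (nsa_add a b) = nsa_add (nsa_star a) (nsa_star b);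
  nsa_star_scal : forall l a, nsa_star (nsa_scal l a) = nsa_scal (Cconj l) (nsa_star a);
  nsa_star_mul : forall a b, nsa_star (nsa_mul a b) = nsa_mul (nsa_star b) (nsa_star a);
  nsa_star_invol : forall a, nsa_star (nsa_star a) = a;
  nsa_norm_nonneg : forall a, 0 <= nsa_norm a;
  nsa_norm_eq0 : forall a, nsa_norm a = 0 -> a = nsa_zero;
  nsa_norm_triangle : forall a b, nsa_norm (nsa_add a b) <= nsa_norm a + nsa_norm b;
  nsa_norm_scal : forall l a, nsa_norm (nsa_scal l a) = Cmod l * nsa_norm a;
  nsa_norm_mul : forall a b, nsa_norm (nsa_mul a b) <= nsa_norm a * nsa_norm b
}.

Arguments nsa_zero {_}.
Arguments nsa_add {_}.
Arguments nsa_opp {_}.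
Arguments nsa_scal {_}.
Arguments nsa_mul {_}.
Arguments nsa_star {_}.
Arguments nsa_norm {_}.

Definition self_adjoint {A : NormedStarAlgebra} (a : A) : Prop := nsa_star a = a.

(** a ^ (k+1) *)
Fixpoint apowS {A : NormedStarAlgebra} (a : A) (k : nat) : A :=
  match k with
  | O => a
  | S k' => nsa_mul a (apowS a k')
  end.

(** t ^ (1/n) for t >= 0, n >= 1 (with 0 ^ (1/n) = 0) *)
Definition nroot (n : nat) (t : R) : R :=
  if Rle_dec t 0 then 0 else Rpower t (/ INR n).

(** [is_r_lambda a r] : r = inf_{n >= 1} |a^n|^{1/n} (greatest lower bound) *)
Definition is_r_lambda {A : NormedStarAlgebra} (a : A) (r : R) : Prop :=
  (forall k : nat, r <= nroot (S k) (nsa_norm (apowS a k))) /\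
  (forall s : R, (forall k : nat, s <= nroot (S k) (nsa_norm (apowS a k))) -> s <= r).

(** [is_r_sigma a s] : s = r_sigma(a) = r_lambda(a^* a)^{1/2} *)
Definition is_r_sigma {A : NormedStarAlgebra} (a : A) (s : R) : Prop :=
  exists r, is_r_lambda (nsa_mul (nsa_star a) a) r /\ s = sqrt r.

(** * Complex pre-Hilbert spaces (not necessarily complete);
      inner product linear in the first, conjugate linear in the second
      argument *)
Record PreHilbert := {
  ph_car :> Type;
  ph_zero : ph_car;
  ph_add : ph_car -> ph_car -> ph_car;
  ph_opp : ph_car -> ph_car;
  ph_scal : C -> ph_car -> ph_car;
  ph_inner : ph_car -> ph_car -> C;
  ph_add_assoc : forall x y z, ph_add x (ph_add y z) = ph_add (ph_add x y) z;
  ph_add_comm : forall x y, ph_add x y = ph_add y x;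
  ph_add_0_l : forall x, ph_add ph_zero x = x;
  ph_add_opp_r : forall x, ph_add x (ph_opp x) = ph_zero;
  ph_scal_assoc : forall l m x, ph_scal l (ph_scal m x) = ph_scal (Cmul l m) x;
  ph_scal_1 : forall x, ph_scal C1 x = x;
  ph_scal_add_l : forall l x y,
    ph_scal l (ph_add x y) = ph_add (ph_scal l x) (ph_scal l y);
  ph_scal_add_r : forall l m x,
    ph_scal (Cadd l m) x = ph_add (ph_scal l x) (ph_scal m x);
  ph_inner_add_l : forall x y z,
    ph_inner (ph_add x y) z = Cadd (ph_inner x z) (ph_inner y z);
  ph_inner_scal_l : forall l x y, ph_inner (ph_scal l x) y = Cmul l (ph_inner x y);
  ph_inner_conj : forall x y, ph_inner y x = Cconj (ph_inner x y);
  ph_inner_pos : forall x, 0 <= Cre (ph_inner x x);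
  ph_inner_def : forall x, ph_inner x x = C0 -> x = ph_zero
}.

Arguments ph_zero {_}.
Arguments ph_add {_}.
Arguments ph_opp {_}.
Arguments ph_scal {_}.
Arguments ph_inner {_}.

Definition ph_norm {H : PreHilbert} (x : H) : R := sqrt (Cre (ph_inner x x)).

Definition is_linear_op {H : PreHilbert} (T : H -> H) : Prop :=
  (forall x y, T (ph_add x y) = ph_add (T x) (T y)) /\
  (forall l x, T (ph_scal l x) = ph_scal l (T x)).

Definition is_representation {A : NormedStarAlgebra} {H : PreHilbert}
    (pi : A -> H -> H) : Prop :=
  (forall a, is_linear_op (pi a)) /\
  (forall a b x, pi (nsa_add a b) x = ph_add (pi a x) (pi b x)) /\
  (forall l a x, pi (nsa_scal l a) x = ph_scal l (pi a x)) /\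
  (forall a b x, pi (nsa_mul a b) x = pi a (pi b x)) /\
  (forall a x y, ph_inner (pi a x) y = ph_inner x (pi (nsa_star a) y)).

Definition weakly_continuous_sa {A : NormedStarAlgebra} {H : PreHilbert}
    (pi : A -> H -> H) : Prop :=
  forall (x : H) (a : A), self_adjoint a ->
    forall eps, 0 < eps -> exists delta, 0 < delta /\
      forall b : A, self_adjoint b ->
        nsa_norm (nsa_add b (nsa_opp a)) < delta ->
        Cmod (Cadd (ph_inner (pi b x) x) (Copp (ph_inner (pi a x) x))) < eps.

Definition bounded_op {H : PreHilbert} (T : H -> H) : Prop :=
  exists M : R, forall x : H, ph_norm (T x) <= M * ph_norm x.

(* Fix [x] and a self-adjoint [h].  Weak continuity at [0] makes the form
   [b |-> Re <pi(b) x, x>] linearly bounded on [A_sa] (wc_linear_bound).  If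
   [|h^(k+1)| <= rho^(k+1)] for one [k], submultiplicativity gives
   [|h^m| <= K rho^m] for all [m] (apowS_growth).  For the dyadic powers
   [h_j = h^(2^j)], [v_j = |pi(h_j) x|] then satisfies
     [v_j^2 = Re <pi(h_(j+1)) x, x> <= v_(j+1) |x|]   and
     [v_j^2 <= M K rho^(2^(j+1))],
   and a purely real argument (squaring_chain_le) yields [v_0 <= rho |x|].
   With [h = a^* a] and [|pi(a) x|^2 = Re <pi(a^* a) x, x>] we get
   [|pi(a) x|^2 <= rho |x|^2] whenever some [|h^(k+1)|^(1/(k+1)) <= rho];
   taking [rho = |h| + 1] gives boundedness, and [rho = r_lambda(h) + eps]
   gives the spectral-radius bound. *)

From Pilot Require Import Defs.
From Stdlib Require Import Reals.
From Stdlib Require Import Lra Lia Psatz Classical.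
Open Scope R_scope.

(* If [X^N <= D Y^N] for arbitrarily large [N] then [X <= Y]: otherwise
   [(X/Y)^N] would be bounded, contradicting Bernoulli's inequality [poly]. *)
Lemma le_of_pow_le_unbounded (X Y D : R) :
  0 <= X -> 0 < Y ->
  (forall n : nat, exists N : nat, (n <= N)%nat /\ X ^ N <= D * Y ^ N) -> X <= Y.
Proof.
  intros HX HY HN. destruct (Rle_or_lt X Y) as [|HXY]; [assumption|exfalso].
  set (t := X / Y - 1).
  assert (EX : X = (1 + t) * Y) by (unfold t; field; lra).
  assert (Ht : 0 < t) by (rewrite EX in HXY; nra).
  destruct (INR_unbounded (D / t)) as [n Hn].
  destruct (HN n) as (N & HnN & HXN).
  rewrite EX, Rpow_mult_distr in HXN.
  assert (HtN : (1 + t) ^ N <= D) by (pose proof (pow_lt Y N HY); nra).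
  pose proof (poly N t Ht) as Hbern.
  assert (Hle : INR n <= INR N) by (apply le_INR; exact HnN).
  assert (HDt : D < INR n * t).
  { apply (Rmult_lt_compat_r t) in Hn; [|exact Ht].
    unfold Rdiv in Hn. rewrite Rmult_assoc, Rinv_l in Hn by lra. lra. }
  nra.
Qed.

Lemma dyadic_square_step (v0 vj c : R) (j : nat) :
  0 <= v0 -> 0 <= c ->
  v0 ^ (2 ^ j) * c <= vj * c ^ (2 ^ j) ->
  v0 ^ (2 ^ S j) * c ^ 2 <= vj ^ 2 * c ^ (2 ^ S j).
Proof.
  intros Hv0 Hc Hj.
  replace (2 ^ S j)%nat with (2 ^ j * 2)%nat by (simpl; lia).
  rewrite !pow_mult, <- !Rpow_mult_distr.
  apply pow_incr. split; [|exact Hj].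
  apply Rmult_le_pos; [apply pow_le|]; assumption.
Qed.

(* By induction [v_0^(2^j) c <= v_j c^(2^j)], hence
   [v_0^(2^(j+1)) <= (D / c^2) (rho c)^(2^(j+1))]. *)
Lemma squaring_chain_le (v : nat -> R) (c rho D : R) :
  0 <= c -> 0 < rho -> (forall j, 0 <= v j) ->
  (forall j, v j ^ 2 <= v (S j) * c) ->
  (forall j, v j ^ 2 <= D * rho ^ (2 ^ S j)) ->
  v O <= rho * c.
Proof.
  intros Hc Hrho Hv Hstep Hgrowth.
  destruct (Req_dec c 0) as [Hc0|Hc0].
  { pose proof (Hstep O) as H0. rewrite Hc0 in *. pose proof (Hv O). nra. }
  assert (Hiter : forall j, v O ^ (2 ^ j) * c <= v j * c ^ (2 ^ j)).
  { induction j as [|j IH]; [simpl; lra|].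
    pose proof (dyadic_square_step _ _ _ j (Hv O) Hc IH) as Hsq.
    apply (Rmult_le_reg_r c); [lra|].
    pose proof (Hstep j). pose proof (pow_le c (2 ^ S j) Hc).
    replace (v O ^ (2 ^ S j) * c * c) with (v O ^ (2 ^ S j) * c ^ 2) by ring.
    nra. }
  apply (le_of_pow_le_unbounded _ _ (D / c ^ 2)); [apply Hv | nra |].
  intros n. exists (2 ^ S n)%nat. split.
  { pose proof (Nat.pow_gt_lin_r 2 (S n)). lia. }
  pose proof (dyadic_square_step _ _ _ n (Hv O) Hc (Hiter n)) as Hsq.
  pose proof (Hgrowth n). pose proof (pow_le c (2 ^ S n) Hc).
  assert (Hc2 : 0 < c ^ 2) by (apply pow_lt; lra).
  apply (Rmult_le_reg_r (c ^ 2)); [exact Hc2|].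
  rewrite Rpow_mult_distr.
  replace (D / c ^ 2 * (rho ^ (2 ^ S n) * c ^ (2 ^ S n)) * c ^ 2)
    with (D * rho ^ (2 ^ S n) * c ^ (2 ^ S n)) by (field; lra).
  nra.
Qed.

Lemma le_of_nonneg_quadratic (a p c : R) : 0 <= a -> 0 <= c ->
  (forall t, 0 <= a + 2 * t * p + t * t * c) -> p <= sqrt a * sqrt c.
Proof.
  intros Ha Hc Hq.
  destruct (Rle_or_lt p 0) as [Hp|Hp].
  { pose proof (sqrt_pos a); pose proof (sqrt_pos c). nra. }
  destruct (Req_dec c 0) as [Hc0|Hc0].
  - exfalso. specialize (Hq (- (a + 1) / (2 * p))). subst c.
    replace (a + 2 * (- (a + 1) / (2 * p)) * p
             + - (a + 1) / (2 * p) * (- (a + 1) / (2 * p)) * 0)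
      with (-1) in Hq by (field; lra).
    lra.
  - specialize (Hq (- p / c)).
    replace (a + 2 * (- p / c) * p + - p / c * (- p / c) * c) with ((a * c - p * p) / c)
      in Hq by (field; lra).
    assert (Hpp : p * p <= a * c).
    { unfold Rdiv in Hq. assert (0 < / c) by (apply Rinv_0_lt_compat; lra). nra. }
    rewrite <- sqrt_mult, <- (sqrt_square p) by lra.
    apply sqrt_le_1_alt. exact Hpp.
Qed.

Lemma nroot_le_pow (k : nat) (t rho : R) :
  0 <= t -> 0 <= rho -> nroot (S k) t <= rho -> t <= rho ^ S k.
Proof.
  unfold nroot. destruct (Rle_dec t 0) as [Ht0|Ht0]; intros Ht Hrho Hroot.
  - pose proof (pow_le rho (S k) Hrho). lra.
  - set (y := Rpower t (/ INR (S k))) in *.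
    assert (Hy : 0 < y) by (unfold y, Rpower; apply exp_pos).
    assert (Ey : y ^ S k = t).
    { rewrite <- Rpower_pow by exact Hy. unfold y. rewrite Rpower_mult, Rinv_l.
      - apply Rpower_1; lra.
      - apply not_0_INR; lia. }
    rewrite <- Ey. apply pow_incr; lra.
Qed.

Lemma le_sqrt_mul_of_sq (u w rho : R) : 0 <= u -> 0 <= w -> 0 <= rho ->
  u ^ 2 <= rho * w ^ 2 -> u <= sqrt rho * w.
Proof.
  intros Hu Hw Hrho Hle.
  rewrite <- (sqrt_pow2 u), <- (sqrt_pow2 w), <- sqrt_mult by (try apply pow_le; lra).
  apply sqrt_le_1_alt. exact Hle.
Qed.

Lemma le_of_le_plus_eps (u w r : R) : 0 <= w ->
  (forall eps, 0 < eps -> u <= (r + eps) * w) -> u <= r * w.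
Proof.
  intros Hw Heps. destruct (Rle_or_lt u (r * w)) as [|Hlt]; [assumption|exfalso].
  destruct (Req_dec w 0) as [Hw0|Hw0].
  - specialize (Heps 1 Rlt_0_1). subst w. lra.
  - assert (Hd : 0 < (u - r * w) / (2 * w)) by (apply Rdiv_lt_0_compat; lra).
    specialize (Heps _ Hd).
    replace ((r + (u - r * w) / (2 * w)) * w) with (r * w + (u - r * w) / 2) in Heps
      by (field; lra). lra.
Qed.

Lemma Cre_le_Cmod (z : Defs.C) : Cre z <= Cmod z.
Proof.
  unfold Cmod. destruct (Rle_or_lt (Cre z) 0).
  - pose proof (sqrt_pos (Cre z ^ 2 + Cim z ^ 2)); lra.
  - rewrite <- (sqrt_pow2 (Cre z)) at 1 by lra. apply sqrt_le_1_alt.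
    pose proof (pow2_ge_0 (Cim z)); lra.
Qed.

Lemma r_lambda_nonneg {A : NormedStarAlgebra} (a : A) (r : R) :
  is_r_lambda a r -> 0 <= r.
Proof.
  intros [_ Hglb]. apply Hglb. intros k. unfold nroot.
  destruct (Rle_dec _ 0); [lra | apply Rlt_le, exp_pos].
Qed.

Lemma r_lambda_approx {A : NormedStarAlgebra} (a : A) (r eps : R) :
  is_r_lambda a r -> 0 < eps ->
  exists k : nat, nroot (S k) (nsa_norm (apowS a k)) <= r + eps.
Proof.
  intros [_ Hglb] Heps. apply NNPP. intros Hnone.
  assert (r + eps <= r); [|lra].
  apply Hglb. intros k. apply Rnot_lt_le. intros Hlt.
  apply Hnone. exists k. lra.
Qed.

Section Algebra.

Variable A : NormedStarAlgebra.

Lemma nsa_idem_zero (u : A) : nsa_add u u = u -> u = nsa_zero.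
Proof.
  intros E.
  assert (E2 : nsa_add (nsa_add u u) (nsa_opp u) = nsa_add u (nsa_opp u)) by now rewrite E.
  rewrite <- nsa_add_assoc, nsa_add_opp_r, nsa_add_comm, nsa_add_0_l in E2. exact E2.
Qed.

Lemma nsa_scal_C0 (a : A) : nsa_scal C0 a = nsa_zero.
Proof.
  apply nsa_idem_zero. rewrite <- nsa_scal_add_r.
  f_equal. unfold Cadd, C0, Cre, Cim; simpl; f_equal; ring.
Qed.

Lemma nsa_opp_zero : @nsa_opp A nsa_zero = nsa_zero.
Proof. pose proof (nsa_add_opp_r A nsa_zero) as E. rewrite nsa_add_0_l in E. exact E. Qed.

(* [0] is self-adjoint: [0^* = (0 * 0)^* = conj(0) * 0^* = 0]. *)
Lemma self_adjoint_zero : self_adjoint (@nsa_zero A).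
Proof.
  assert (Hconj : Cconj C0 = C0) by (unfold Cconj, C0, Cre, Cim; simpl; f_equal; ring).
  unfold self_adjoint. rewrite <- (nsa_scal_C0 nsa_zero) at 1.
  rewrite nsa_star_scal, Hconj. apply nsa_scal_C0.
Qed.

(* Multiplication by a real scalar; it preserves self-adjointness and scales
   the norm, which is what the continuity-at-zero argument needs. *)
Definition rscal (t : R) (a : A) : A := nsa_scal (t, 0) a.

Lemma self_adjoint_rscal (t : R) (a : A) : self_adjoint a -> self_adjoint (rscal t a).
Proof.
  unfold self_adjoint, rscal. intros Ha. rewrite nsa_star_scal, Ha. f_equal.
  unfold Cconj, Cre, Cim; simpl. f_equal; ring.
Qed.

Lemma nsa_norm_rscal (t : R) (a : A) : 0 <= t -> nsa_norm (rscal t a) = t * nsa_norm a.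
Proof.
  intros Ht. unfold rscal. rewrite nsa_norm_scal. f_equal.
  unfold Cmod, Cre, Cim; simpl. replace (t * (t * 1) + 0 * (0 * 1)) with (t * t) by ring.
  apply sqrt_square, Ht.
Qed.

Lemma self_adjoint_star_mul (a : A) : self_adjoint (nsa_mul (nsa_star a) a).
Proof. unfold self_adjoint. rewrite nsa_star_mul, nsa_star_invol. reflexivity. Qed.

Lemma apowS_mul (h : A) (i j : nat) :
  nsa_mul (apowS h i) (apowS h j) = apowS h (i + j + 1).
Proof.
  induction i as [|i IH]; simpl.
  - replace (j + 1)%nat with (S j) by lia. reflexivity.
  - rewrite <- nsa_mul_assoc, IH. reflexivity.
Qed.

Fixpoint dyadic_pow (h : A) (j : nat) : A :=
  match j with O => h | S j' => nsa_mul (dyadic_pow h j') (dyadic_pow h j') end.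

Lemma dyadic_pow_apowS (h : A) (j : nat) : dyadic_pow h j = apowS h (2 ^ j - 1).
Proof.
  induction j as [|j IH]; simpl; [reflexivity|].
  rewrite IH, apowS_mul. f_equal.
  pose proof (Nat.pow_nonzero 2 j). lia.
Qed.

Lemma self_adjoint_dyadic_pow (h : A) (j : nat) :
  self_adjoint h -> self_adjoint (dyadic_pow h j).
Proof.
  unfold self_adjoint. intros Hh. induction j as [|j IH]; simpl; [exact Hh|].
  rewrite nsa_star_mul, IH. reflexivity.
Qed.

Lemma finite_upper_bound (f : nat -> R) (k : nat) :
  exists K, 0 <= K /\ forall i, (i <= k)%nat -> f i <= K.
Proof.
  induction k as [|k (K & HK & Hbound)].
  - exists (Rmax 0 (f O)). split; [apply Rmax_l|].
    intros i Hi. replace i with O by lia. apply Rmax_r.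
  - exists (Rmax K (f (S k))). split; [eapply Rle_trans; [exact HK | apply Rmax_l]|].
    intros i Hi. destruct (Nat.eq_dec i (S k)) as [->|Hne]; [apply Rmax_r|].
    eapply Rle_trans; [apply Hbound; lia | apply Rmax_l].
Qed.

(* One power bound [|h^(k+1)| <= rho^(k+1)] controls all powers:
   [|h^(m+1)| <= K rho^(m+1)], by splitting [h^(m+1) = h^(k+1) h^(m-k)]. *)
Lemma apowS_growth (h : A) (rho : R) (k : nat) :
  0 < rho -> nsa_norm (apowS h k) <= rho ^ S k ->
  exists K, 0 <= K /\ forall m, nsa_norm (apowS h m) <= K * rho ^ S m.
Proof.
  intros Hrho Hk.
  destruct (finite_upper_bound (fun i => nsa_norm (apowS h i) / rho ^ S i) k)
    as (K & HK & Hbound).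
  exists K. split; [exact HK|].
  intros m. induction m as [m IH] using (well_founded_induction Wf_nat.lt_wf).
  destruct (Compare_dec.le_lt_dec m k) as [Hm|Hm].
  - specialize (Hbound m Hm). simpl in Hbound. pose proof (pow_lt rho (S m) Hrho).
    apply (Rmult_le_compat_r (rho ^ S m)) in Hbound; [|lra].
    unfold Rdiv in Hbound. rewrite Rmult_assoc, Rinv_l in Hbound by lra. lra.
  - replace (apowS h m) with (nsa_mul (apowS h k) (apowS h (m - k - 1)))
      by (rewrite apowS_mul; f_equal; lia).
    replace (rho ^ S m) with (rho ^ S k * rho ^ S (m - k - 1))
      by (rewrite <- pow_add; f_equal; lia).
    eapply Rle_trans; [apply nsa_norm_mul|].
    rewrite Rmult_comm with (r1 := K), Rmult_assoc.
    apply Rmult_le_compat; try apply nsa_norm_nonneg; [exact Hk|].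
    rewrite Rmult_comm. apply IH. lia.
Qed.

End Algebra.

Section InnerProduct.

Variable H : PreHilbert.

Lemma ph_norm_nonneg (x : H) : 0 <= ph_norm x.
Proof. apply sqrt_pos. Qed.

Lemma ph_norm_sq (x : H) : ph_norm x ^ 2 = Cre (ph_inner x x).
Proof. apply pow2_sqrt, ph_inner_pos. Qed.

(* Cauchy-Schwarz for the real part, from positivity of [<u + t w, u + t w>]. *)
Lemma cauchy_schwarz_re (u w : H) : Cre (ph_inner u w) <= ph_norm u * ph_norm w.
Proof.
  apply le_of_nonneg_quadratic; try apply ph_inner_pos.
  intros t. pose proof (ph_inner_pos H (ph_add u (ph_scal (t, 0) w))) as Hpos.
  rewrite ph_inner_add_l, ph_inner_scal_l, !(ph_inner_conj H (ph_add u _)),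
    !ph_inner_add_l, !ph_inner_scal_l, (ph_inner_conj H u w) in Hpos.
  destruct (ph_inner u u) as [a1 a2], (ph_inner u w) as [p q], (ph_inner w w) as [c1 c2].
  unfold Cadd, Cmul, Cconj, Cre, Cim in *. simpl in *. nra.
Qed.

End InnerProduct.

Section Representation.

Variables (A : NormedStarAlgebra) (H : PreHilbert) (pi : A -> H -> H).
Hypothesis Hpi : is_representation pi.

Lemma rep_norm_sq (b : A) (x : H) :
  ph_norm (pi b x) ^ 2 = Cre (ph_inner (pi (nsa_mul (nsa_star b) b) x) x).
Proof.
  destruct Hpi as (_ & _ & _ & Hmul & Hadj).
  rewrite ph_norm_sq, Hadj, <- Hmul, ph_inner_conj. reflexivity.
Qed.

Lemma rep_rscal_form (t : R) (b : A) (x : H) :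
  Cre (ph_inner (pi (rscal A t b) x) x) = t * Cre (ph_inner (pi b x) x).
Proof.
  destruct Hpi as (_ & _ & Hscal & _ & _). unfold rscal.
  rewrite Hscal, ph_inner_scal_l. unfold Cmul, Cre, Cim; simpl. ring.
Qed.

Lemma rep_form_zero (x : H) : Cre (ph_inner (pi nsa_zero x) x) = 0.
Proof.
  rewrite <- (nsa_scal_C0 A nsa_zero).
  change (nsa_scal C0 nsa_zero) with (rscal A 0 (@nsa_zero A)).
  rewrite rep_rscal_form. ring.
Qed.

Hypothesis Hwc : weakly_continuous_sa pi.

(* Continuity of the form at [0] on [A_sa] makes it linearly bounded there:
   rescale [b] into the [delta]-ball on which the form is below [1]. *)
Lemma wc_linear_bound (x : H) :
  exists M, 0 <= M /\ forall b : A, self_adjoint b ->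
    Cre (ph_inner (pi b x) x) <= M * nsa_norm b.
Proof.
  destruct (Hwc x nsa_zero (self_adjoint_zero A) 1 Rlt_0_1) as (d & Hd & Hcont).
  exists (2 / d). split; [apply Rlt_le, Rdiv_lt_0_compat; lra|].
  intros b Hb. pose proof (nsa_norm_nonneg A b) as Hnb.
  destruct (Req_dec (nsa_norm b) 0) as [Hn0|Hn0].
  { apply nsa_norm_eq0 in Hn0. subst b. rewrite rep_form_zero.
    pose proof (nsa_norm_nonneg A nsa_zero). apply Rmult_le_pos; [|lra].
    apply Rlt_le, Rdiv_lt_0_compat; lra. }
  set (c := d / (2 * nsa_norm b)).
  assert (Hc : 0 < c) by (apply Rdiv_lt_0_compat; lra).
  specialize (Hcont (rscal A c b) (self_adjoint_rscal A c b Hb)).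
  rewrite nsa_opp_zero, nsa_add_comm, nsa_add_0_l, nsa_norm_rscal in Hcont by lra.
  assert (Hsmall : c * nsa_norm b < d)
    by (unfold c; replace (d / (2 * nsa_norm b) * nsa_norm b) with (d / 2) by (field; lra); lra).
  specialize (Hcont Hsmall).
  assert (Hre : c * Cre (ph_inner (pi b x) x) < 1).
  { eapply Rle_lt_trans; [|exact Hcont]. eapply Rle_trans; [|apply Cre_le_Cmod].
    unfold Cadd, Copp. simpl. rewrite rep_rscal_form, rep_form_zero. lra. }
  assert (Hc1 : c * (2 / d * nsa_norm b) = 1) by (unfold c; field; lra).
  nra.
Qed.

(* The sequence [v j = |pi(h^(2^j)) x|] satisfies [v j ^ 2 <= v (j+1) |x|]
   (Cauchy-Schwarz) and [v j ^ 2 <= M K rho^(2^(j+1))] (weak continuity and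
   power growth), so [squaring_chain_le] applies. *)
Lemma self_adjoint_rep_bound (h : A) (rho : R) (k : nat) :
  self_adjoint h -> 0 < rho -> nsa_norm (apowS h k) <= rho ^ S k ->
  forall x : H, ph_norm (pi h x) <= rho * ph_norm x.
Proof.
  intros Hh Hrho Hk x.
  destruct (wc_linear_bound x) as (M & HM & Hlin).
  destruct (apowS_growth A h rho k Hrho Hk) as (K & HK & Hgrowth).
  set (v := fun j => ph_norm (pi (dyadic_pow A h j) x)).
  assert (Hv_sq : forall j, v j ^ 2 = Cre (ph_inner (pi (dyadic_pow A h (S j)) x) x)).
  { intros j. unfold v. rewrite rep_norm_sq, self_adjoint_dyadic_pow by exact Hh.
    reflexivity. }
  apply (squaring_chain_le v (ph_norm x) rho (M * K)).
  - apply ph_norm_nonneg.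
  - exact Hrho.
  - intros j. apply ph_norm_nonneg.
  - intros j. rewrite Hv_sq. apply cauchy_schwarz_re.
  - intros j. rewrite Hv_sq.
    eapply Rle_trans; [apply Hlin, self_adjoint_dyadic_pow, Hh|].
    rewrite dyadic_pow_apowS, Rmult_assoc. apply Rmult_le_compat_l; [exact HM|].
    replace (rho ^ (2 ^ S j)) with (rho ^ S (2 ^ S j - 1))
      by (f_equal; pose proof (Nat.pow_nonzero 2 (S j)); lia).
    apply Hgrowth.
Qed.

(* Applied to [h = a^* a], using [|pi a x|^2 = Re <pi(a^* a) x, x>] and
   Cauchy-Schwarz once more. *)
Lemma rep_sq_bound (a : A) (rho : R) (k : nat) :
  0 < rho -> nsa_norm (apowS (nsa_mul (nsa_star a) a) k) <= rho ^ S k ->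
  forall x : H, ph_norm (pi a x) ^ 2 <= rho * ph_norm x ^ 2.
Proof.
  intros Hrho Hk x.
  rewrite rep_norm_sq. eapply Rle_trans; [apply cauchy_schwarz_re|].
  pose proof (self_adjoint_rep_bound _ _ _ (self_adjoint_star_mul A a) Hrho Hk x).
  pose proof (ph_norm_nonneg H x).
  replace (rho * ph_norm x ^ 2) with (rho * ph_norm x * ph_norm x) by ring.
  apply Rmult_le_compat_r; assumption.
Qed.

End Representation.

Theorem theorem22p5 (A : NormedStarAlgebra) (H : PreHilbert) (pi : A -> H -> H)
  (Hpi : is_representation pi) (Hwc : weakly_continuous_sa pi) :
  forall a : A,
    bounded_op (pi a) /\
    (forall s : R, is_r_sigma a s -> forall x : H, ph_norm (pi a x) <= s * ph_norm x).
Proof.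
  intros a. set (h := nsa_mul (nsa_star a) a).
  split.
  - (* the first power of [h] already satisfies the bound with [rho = |h| + 1] *)
    exists (sqrt (nsa_norm h + 1)). intros x.
    pose proof (nsa_norm_nonneg A h).
    apply le_sqrt_mul_of_sq; try apply ph_norm_nonneg; [lra|].
    apply (rep_sq_bound A H pi Hpi Hwc a _ 0); [lra|].
    change (nsa_norm h <= (nsa_norm h + 1) * 1). lra.
  - (* some root [|h^(k+1)|^(1/(k+1))] is at most [r_lambda(h) + eps] *)
    intros s (r & Hr & ->) x.
    pose proof (r_lambda_nonneg h r Hr).
    apply le_sqrt_mul_of_sq; try apply ph_norm_nonneg; [lra|].
    apply le_of_le_plus_eps; [apply pow2_ge_0|]. intros eps Heps.
    destruct (r_lambda_approx h r eps Hr Heps) as [k Hk].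
    apply (rep_sq_bound A H pi Hpi Hwc a _ k); [lra|].
    apply nroot_le_pow; [apply nsa_norm_nonneg | lra | exact Hk].
Qed.
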